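(* Let $0<s<1$. Define $$J_s(r,\widetilde r)=\frac{r}{\widetilde r}\min\Big\{1,\frac{(3-s)\widetilde r-2}{(1-s)r-2}\Big\}$$ on $$K(s)=\Big[2,\frac{6}{(3-4s)_+}\Big]\times\Big[\max\Big\{1,\frac{6}{7-4s}\Big\},\frac{2}{2-s}\Big].$$ Then $$\sup_{(r,\widetilde r)\in K(s)}J_s(r,\widetilde r)=\begin{cases}\frac{3-s}{1-s}, & \frac12\leq s<1,\\[2pt] \frac{7-4s}{3-4s}, & \frac14\leq s\leq\frac12,\\[2pt] \frac{6}{3-4s}, & 0<s\leq\frac14.\end{cases}$$ Moreover, the supremum is attained in each case: (i) if $0<s\leq\frac14$, at $(r,\widetilde r)=(\frac{6}{3-4s},1)$; (ii) if $\frac14\leq s\leq\frac12$, at $(r,\widetilde r)=(\frac6{3-4s},\frac6{7-4s})$; (iii) if $\frac12\le s<1$, at the points with $\widetilde r=\frac{1-s}{3-s}r$ and $$\frac{6}{7-4s}\cdot\frac{3-s}{1-s}\leq r\leq\begin{cases}\frac{6}{3-4s}, & \frac12\leq s\leq 3-\sqrt6,\\ \frac{2}{2-s}\cdot\frac{3-s}{1-s}, & 3-\sqrt6\leq s<1.\end{cases}$$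
   Context: Here $x_+=\max(x,0)$, with the convention $\frac60=\infty$. *)

From Stdlib Require Import Reals Lra.
Open Scope R_scope.

Definition J (s r rt : R) : R :=
  r / rt * Rmin 1 (((3 - s) * rt - 2) / ((1 - s) * r - 2)).

(* Membership in K(s) = [2, 6/(3-4s)_+] x [max{1, 6/(7-4s)}, 2/(2-s)],
   with the convention 6/0 = +infinity: the upper bound on r is only
   active when 3 - 4s > 0. *)
Definition inK (s r rt : R) : Prop :=
  2 <= r /\ (0 < 3 - 4 * s -> r <= 6 / (3 - 4 * s)) /\
  Rmax 1 (6 / (7 - 4 * s)) <= rt /\ rt <= 2 / (2 - s).

From Stdlib Require Import Reals Lra Psatz.
Open Scope R_scope.

(* Since [J s r rt <= r / rt], the supremum is at most the corner value
   [max r / min rt] of [K(s)], which gives the bounds for [s <= 1/2].  The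
   universal bound [(3 - s) / (1 - s)] comes from the second branch of the
   minimum: when [r / rt] exceeds it, cross-multiplying shows that
   [(r / rt) * ((3 - s) rt - 2) / ((1 - s) r - 2)] stays below it, the
   difference of the two cross products being [2 ((1 - s) r - (3 - s) rt)].
   Each bound is attained where the first branch of the minimum is active; for
   [s >= 1/2] these are the points of the segment [(3 - s) rt = (1 - s) r]
   inside [K(s)], and which side of [K(s)] cuts the segment off at its upper
   end depends on the sign of [(3 - s)^2 - 6]. *)

Lemma Rdiv_le_div_iff a b c d :
  0 < b -> 0 < d -> a / b <= c / d <-> a * d <= c * b.
Proof.
  intros Hb Hd; split; intro H.
  - replace (a * d) with (a / b * (b * d)) by (field; lra).
    replace (c * b) with (c / d * (b * d)) by (field; lra).
    apply Rmult_le_compat_r; nra.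
  - replace (a / b) with (a * d * / (b * d)) by (field; lra).
    replace (c / d) with (c * b * / (b * d)) by (field; lra).
    apply Rmult_le_compat_r; [left; apply Rinv_0_lt_compat; nra | exact H].
Qed.

Lemma Rle_div_iff a c d : 0 < d -> a <= c / d <-> a * d <= c.
Proof.
  intro Hd; rewrite <- (Rdiv_1_r a) at 1.
  rewrite Rdiv_le_div_iff, Rmult_1_r; lra.
Qed.

Lemma Rdiv_le_iff a c d : 0 < d -> a / d <= c <-> a <= c * d.
Proof.
  intro Hd; rewrite <- (Rdiv_1_r c) at 1.
  rewrite Rdiv_le_div_iff, Rmult_1_r; lra.
Qed.

Lemma J_le_ratio s r rt : 0 <= r -> 0 < rt -> J s r rt <= r / rt.
Proof.
  intros Hr Hrt; unfold J.
  rewrite <- (Rmult_1_r (r / rt)) at 2.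
  apply Rmult_le_compat_l; [apply Rle_div_iff; lra | apply Rmin_l].
Qed.

Lemma J_eq_ratio s r rt :
  0 < (1 - s) * r - 2 <= (3 - s) * rt - 2 -> J s r rt = r / rt.
Proof.
  intros [Hd Hn]; unfold J.
  rewrite Rmin_left; [ring | apply Rle_div_iff; lra].
Qed.

Lemma J_le_3s_1s s r rt :
  s < 1 -> 0 < r -> 1 <= rt -> J s r rt <= (3 - s) / (1 - s).
Proof.
  intros Hs Hr Hrt.
  destruct (Rle_dec (r * (1 - s)) ((3 - s) * rt)) as [Hle | Hgt].
  - apply Rle_trans with (r / rt); [apply J_le_ratio; lra|].
    apply Rdiv_le_div_iff; lra.
  - assert (Hd : 0 < (1 - s) * r - 2) by nra.
    unfold J.
    apply Rle_trans with (r / rt * (((3 - s) * rt - 2) / ((1 - s) * r - 2))).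
    { apply Rmult_le_compat_l; [apply Rle_div_iff; lra | apply Rmin_r]. }
    replace (r / rt * (((3 - s) * rt - 2) / ((1 - s) * r - 2)))
      with (r * ((3 - s) * rt - 2) / (rt * ((1 - s) * r - 2))) by (field; lra).
    apply Rdiv_le_div_iff; [nra | lra | nra].
Qed.

Lemma K_rt_min_small s : s <= 1/4 -> Rmax 1 (6 / (7 - 4 * s)) = 1.
Proof. intro Hs; apply Rmax_left, Rdiv_le_iff; lra. Qed.

Lemma K_rt_min_large s : 1/4 <= s < 7/4 -> Rmax 1 (6 / (7 - 4 * s)) = 6 / (7 - 4 * s).
Proof. intro Hs; apply Rmax_right, Rle_div_iff; lra. Qed.

Lemma K_r_max_excess s :
  3 - 4 * s <> 0 -> (1 - s) * (6 / (3 - 4 * s)) - 2 = 2 * s / (3 - 4 * s).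
Proof. intro; field; lra. Qed.

Lemma K_rt_min_excess s :
  7 - 4 * s <> 0 -> (3 - s) * (6 / (7 - 4 * s)) - 2 = (4 + 2 * s) / (7 - 4 * s).
Proof. intro; field; lra. Qed.

Lemma J_sup_small s : 0 < s <= 1/4 ->
  (forall r rt, inK s r rt -> J s r rt <= 6 / (3 - 4 * s)) /\
  inK s (6 / (3 - 4 * s)) 1 /\
  J s (6 / (3 - 4 * s)) 1 = 6 / (3 - 4 * s).
Proof.
  intros Hs.
  assert (H34 : 0 < 3 - 4 * s) by lra.
  split; [|split].
  - intros r rt (Hr & Hrb & Hrt & _).
    rewrite K_rt_min_small in Hrt by lra.
    specialize (Hrb H34).
    apply Rle_trans with (r / rt); [apply J_le_ratio; lra|].
    rewrite <- (Rdiv_1_r (6 / (3 - 4 * s))).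
    apply Rdiv_le_div_iff; nra.
  - unfold inK; rewrite K_rt_min_small by lra.
    repeat split; try lra; apply Rle_div_iff; lra.
  - rewrite J_eq_ratio, Rdiv_1_r; [reflexivity|].
    rewrite K_r_max_excess by lra.
    split; [apply Rdiv_lt_0_compat; lra | apply Rdiv_le_iff; nra].
Qed.

Lemma J_sup_mid s : 1/4 <= s <= 1/2 ->
  (forall r rt, inK s r rt -> J s r rt <= (7 - 4 * s) / (3 - 4 * s)) /\
  inK s (6 / (3 - 4 * s)) (6 / (7 - 4 * s)) /\
  J s (6 / (3 - 4 * s)) (6 / (7 - 4 * s)) = (7 - 4 * s) / (3 - 4 * s).
Proof.
  intros Hs.
  assert (H34 : 0 < 3 - 4 * s) by lra.
  assert (Hcorner : 6 / (3 - 4 * s) / (6 / (7 - 4 * s)) = (7 - 4 * s) / (3 - 4 * s))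
    by (field; lra).
  split; [|split].
  - intros r rt (Hr & Hrb & Hrt & _).
    rewrite K_rt_min_large in Hrt by lra.
    specialize (Hrb H34).
    assert (Ha : 0 < 6 / (7 - 4 * s)) by (apply Rdiv_lt_0_compat; lra).
    apply Rle_trans with (r / rt); [apply J_le_ratio; lra|].
    rewrite <- Hcorner.
    apply Rdiv_le_div_iff; nra.
  - unfold inK; rewrite K_rt_min_large by lra.
    repeat split; try lra.
    + apply Rle_div_iff; lra.
    + apply Rdiv_le_div_iff; lra.
  - rewrite J_eq_ratio; [exact Hcorner|].
    rewrite K_r_max_excess, K_rt_min_excess by lra.
    split; [apply Rdiv_lt_0_compat | apply Rdiv_le_div_iff]; nra.
Qed.

Lemma sqr_3_sub_ge_6 s : s <= 3 - sqrt 6 -> 6 <= (3 - s) ^ 2.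
Proof.
  intro Hs; pose proof (sqrt_pos 6); pose proof (sqrt_sqrt 6 ltac:(lra)); nra.
Qed.

Lemma sqr_3_sub_le_6 s : 3 - sqrt 6 <= s <= 3 -> (3 - s) ^ 2 <= 6.
Proof.
  intro Hs; pose proof (sqrt_pos 6); pose proof (sqrt_sqrt 6 ltac:(lra)); nra.
Qed.

Lemma r_max_le_scaled_rt_max s : 0 < 3 - 4 * s -> s < 1 -> 6 <= (3 - s) ^ 2 ->
  6 / (3 - 4 * s) <= 2 / (2 - s) * ((3 - s) / (1 - s)).
Proof.
  intros H34 Hs Hsq.
  replace (2 / (2 - s) * ((3 - s) / (1 - s))) with (2 * (3 - s) / ((2 - s) * (1 - s)))
    by (field; lra).
  apply Rdiv_le_div_iff; nra.
Qed.

Lemma scaled_rt_max_le_r_max s : 0 < 3 - 4 * s -> s < 1 -> (3 - s) ^ 2 <= 6 ->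
  2 / (2 - s) * ((3 - s) / (1 - s)) <= 6 / (3 - 4 * s).
Proof.
  intros H34 Hs Hsq.
  replace (2 / (2 - s) * ((3 - s) / (1 - s))) with (2 * (3 - s) / ((2 - s) * (1 - s)))
    by (field; lra).
  apply Rdiv_le_div_iff; nra.
Qed.

Lemma segment_r_max s r : 1/2 <= s < 1 ->
  (s <= 3 - sqrt 6 -> r <= 6 / (3 - 4 * s)) ->
  (3 - sqrt 6 <= s -> r <= 2 / (2 - s) * ((3 - s) / (1 - s))) ->
  r <= 2 / (2 - s) * ((3 - s) / (1 - s)) /\
  (0 < 3 - 4 * s -> r <= 6 / (3 - 4 * s)).
Proof.
  intros Hs Hsmall Hlarge.
  destruct (Rle_or_lt s (3 - sqrt 6)) as [Hs6 | Hs6].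
  - pose proof (sqr_3_sub_ge_6 s Hs6) as Hsq.
    assert (H34 : 0 < 3 - 4 * s) by nra.
    split; [|intros _; exact (Hsmall Hs6)].
    apply Rle_trans with (6 / (3 - 4 * s));
      [exact (Hsmall Hs6) | apply r_max_le_scaled_rt_max; lra].
  - assert (Hsq : (3 - s) ^ 2 <= 6) by (apply sqr_3_sub_le_6; lra).
    split; [apply Hlarge; lra | intro H34].
    apply Rle_trans with (2 / (2 - s) * ((3 - s) / (1 - s)));
      [apply Hlarge; lra | apply scaled_rt_max_le_r_max; lra].
Qed.

Lemma segment_in_K s r : 1/2 <= s < 1 ->
  6 / (7 - 4 * s) * ((3 - s) / (1 - s)) <= r ->
  r <= 2 / (2 - s) * ((3 - s) / (1 - s)) ->
  (0 < 3 - 4 * s -> r <= 6 / (3 - 4 * s)) ->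
  inK s r ((1 - s) / (3 - s) * r).
Proof.
  intros Hs Hlo Hrc Hrb.
  assert (HB : 0 < (3 - s) / (1 - s)) by (apply Rdiv_lt_0_compat; lra).
  replace ((1 - s) / (3 - s) * r) with (r / ((3 - s) / (1 - s))) by (field; lra).
  unfold inK; rewrite K_rt_min_large by lra.
  repeat split; [| exact Hrb | apply Rle_div_iff; lra | apply Rdiv_le_iff; lra].
  apply Rle_trans with (6 / (7 - 4 * s) * ((3 - s) / (1 - s))); [|exact Hlo].
  replace (6 / (7 - 4 * s) * ((3 - s) / (1 - s)))
    with (6 * (3 - s) / ((7 - 4 * s) * (1 - s))) by (field; lra).
  apply Rle_div_iff; nra.
Qed.

Lemma J_on_segment s r : s < 1 -> 2 < (1 - s) * r ->
  J s r ((1 - s) / (3 - s) * r) = (3 - s) / (1 - s).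
Proof.
  intros Hs Hr.
  rewrite J_eq_ratio; [field; split; nra|].
  replace ((3 - s) * ((1 - s) / (3 - s) * r)) with ((1 - s) * r) by (field; lra).
  lra.
Qed.

Lemma J_sup_large s : 1/2 <= s < 1 ->
  (forall r rt, inK s r rt -> J s r rt <= (3 - s) / (1 - s)) /\
  (forall r,
     6 / (7 - 4 * s) * ((3 - s) / (1 - s)) <= r ->
     (s <= 3 - sqrt 6 -> r <= 6 / (3 - 4 * s)) ->
     (3 - sqrt 6 <= s -> r <= 2 / (2 - s) * ((3 - s) / (1 - s))) ->
     inK s r ((1 - s) / (3 - s) * r) /\
     J s r ((1 - s) / (3 - s) * r) = (3 - s) / (1 - s)).
Proof.
  intros Hs; split.
  - intros r rt (Hr & _ & Hrt & _).
    apply J_le_3s_1s; [lra | lra |].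
    apply Rle_trans with (Rmax 1 (6 / (7 - 4 * s))); [apply Rmax_l | exact Hrt].
  - intros r Hlo Hsmall Hlarge.
    destruct (segment_r_max s r Hs Hsmall Hlarge) as [Hrc Hrb].
    split; [apply segment_in_K; auto |].
    apply J_on_segment; [lra|].
    assert (Hcorner : (1 - s) * (6 / (7 - 4 * s) * ((3 - s) / (1 - s)))
                      = (3 - s) * (6 / (7 - 4 * s))) by (field; lra).
    assert (Hexcess : 0 < (3 - s) * (6 / (7 - 4 * s)) - 2)
      by (rewrite K_rt_min_excess by lra; apply Rdiv_lt_0_compat; lra).
    nra.
Qed.

Theorem lemma3p3 (s : R) (hs0 : 0 < s) (hs1 : s < 1) :
  (* case 0 < s <= 1/4 *)
  (s <= 1/4 ->
     (forall r rt, inK s r rt -> J s r rt <= 6 / (3 - 4 * s)) /\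
     inK s (6 / (3 - 4 * s)) 1 /\
     J s (6 / (3 - 4 * s)) 1 = 6 / (3 - 4 * s)) /\
  (* case 1/4 <= s <= 1/2 *)
  (1/4 <= s <= 1/2 ->
     (forall r rt, inK s r rt -> J s r rt <= (7 - 4 * s) / (3 - 4 * s)) /\
     inK s (6 / (3 - 4 * s)) (6 / (7 - 4 * s)) /\
     J s (6 / (3 - 4 * s)) (6 / (7 - 4 * s)) = (7 - 4 * s) / (3 - 4 * s)) /\
  (* case 1/2 <= s < 1 *)
  (1/2 <= s ->
     (forall r rt, inK s r rt -> J s r rt <= (3 - s) / (1 - s)) /\
     (forall r,
        6 / (7 - 4 * s) * ((3 - s) / (1 - s)) <= r ->
        (s <= 3 - sqrt 6 -> r <= 6 / (3 - 4 * s)) ->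
        (3 - sqrt 6 <= s -> r <= 2 / (2 - s) * ((3 - s) / (1 - s))) ->
        inK s r ((1 - s) / (3 - s) * r) /\
        J s r ((1 - s) / (3 - s) * r) = (3 - s) / (1 - s))).
Proof.
  split; [|split]; intro Hs.
  - apply J_sup_small; lra.
  - apply J_sup_mid; lra.
  - apply J_sup_large; lra.
Qed.
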